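(* Let $1\le p\le n$, $\beta>0$, and $X\in\mathbb{R}^{n\times p}_*$. Let $\mathrm{T}_X\mathrm{St}_{X^\top X}=\{\xi\in\mathbb{R}^{n\times p}\mid \xi^\top X+X^\top\xi=0\}$ be the tangent space at $X$ of $\mathrm{St}_{X^\top X}=\{Y\in\mathbb{R}^{n\times p}\mid Y^\top Y=X^\top X\}$. The orthogonal projection $\mathrm{Proj}_{X,\beta}:\mathbb{R}^{n\times p}\to\mathrm{T}_X\mathrm{St}_{X^\top X}$ with respect to $g^\beta_X$ (i.e., the map characterized by $\mathrm{Proj}_{X,\beta}(Z)\in\mathrm{T}_X\mathrm{St}_{X^\top X}$ and $g^\beta_X(\xi,Z-\mathrm{Proj}_{X,\beta}(Z))=0$ for all $\xi\in\mathrm{T}_X\mathrm{St}_{X^\top X}$) is given, for all $Z\in\mathbb{R}^{n\times p}$, by \[\mathrm{Proj}_{X,\beta}(Z)=X(X^\top X)^{-1}\operatorname{skew}(X^\top Z)+\big(\mathrm{I}_n-X(X^\top X)^{-1}X^\top\big)Z.\]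
   Context: $\mathbb{R}^{n\times p}_*$ denotes the set of full-rank (rank $p$) real $n\times p$ matrices, and $\operatorname{skew}(A)=(A-A^\top)/2$. For $\beta>0$ and $X\in\mathbb{R}^{n\times p}_*$, the $\beta$-metric is the inner product on $\mathbb{R}^{n\times p}$ given by \[g^\beta_X(\xi,\zeta)=\mathrm{trace}\Big(\xi^\top\big(\mathrm{I}_n-(1-\beta)X(X^\top X)^{-1}X^\top\big)\zeta\,(X^\top X)^{-1}\Big),\qquad \xi,\zeta\in\mathbb{R}^{n\times p}.\] *)

From mathcomp Require Import all_boot all_order all_algebra.
Set Implicit Arguments. Unset Strict Implicit. Unset Printing Implicit Defensive.
Import Order.TTheory GRing.Theory Num.Theory.
Local Open Scope ring_scope.

Definition skew (R : realFieldType) (p : nat) (A : 'M[R]_p) : 'M[R]_p :=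
  2^-1 *: (A - A^T).

Definition gbeta (R : realFieldType) (n p : nat) (beta : R) (X : 'M[R]_(n, p))
  (xi zeta : 'M[R]_(n, p)) : R :=
  \tr (xi^T *m (1%:M - (1 - beta) *: (X *m invmx (X^T *m X) *m X^T))
        *m zeta *m invmx (X^T *m X)).

Definition tangentSt (R : realFieldType) (n p : nat) (X xi : 'M[R]_(n, p)) : Prop :=
  xi^T *m X + X^T *m xi = 0.

Definition projFormula (R : realFieldType) (n p : nat) (X Z : 'M[R]_(n, p))
  : 'M[R]_(n, p) :=
  X *m invmx (X^T *m X) *m skew (X^T *m Z)
  + (1%:M - X *m invmx (X^T *m X) *m X^T) *m Z.

From Pilot Require Import Defs.
From mathcomp Require Import all_boot all_order all_algebra.
From mathcomp Require Import lra.
Set Implicit Arguments.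
Unset Strict Implicit.
Unset Printing Implicit Defensive.
Import Order.TTheory GRing.Theory Num.Theory.
Local Open Scope ring_scope.

(* Write G = X^T X, P = X G^-1 X^T and M = I - (1 - beta) P, so that
   g(xi, zeta) = tr(xi^T M zeta G^-1) and X^T M = beta X^T.
   The formula F lies in the tangent space because X^T F = skew(X^T Z), and
   Z - F = X G^-1 Y with Y = X^T Z - skew(X^T Z) symmetric, so
   g(xi, Z - F) = beta tr((xi^T X) (G^-1 Y G^-1)) vanishes: it is the trace
   of a skew matrix times a symmetric one.
   For uniqueness, g_X^beta is nondegenerate on the tangent space: given a
   tangent D orthogonal to all tangent vectors, split D = N + X G^-1 A with
   N = D - P D and A = X^T D skew; the tangent vectors N G and X A G give
   tr(N^T N) = 0 and beta tr(A^T A) = 0, hence D = 0. *)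

Lemma mxtrace_gram_eq0 (R : realDomainType) (m k : nat) (A : 'M[R]_(m, k)) :
  \tr (A^T *m A) = 0 -> A = 0.
Proof.
have -> : \tr (A^T *m A) = \sum_i \sum_j A j i ^+ 2.
  apply: eq_bigr => i _; rewrite !mxE.
  by apply: eq_bigr => j _; rewrite !mxE expr2.
move/eqP; rewrite psumr_eq0 => [/allP sum0|i _]; last first.
  by apply: sumr_ge0 => j _; exact: sqr_ge0.
apply/matrixP => j i; rewrite mxE.
move: (sum0 i (mem_index_enum i)); rewrite /= psumr_eq0 => [|l _]; last exact: sqr_ge0.
by move/allP/(_ j (mem_index_enum j)); rewrite /= sqrf_eq0 => /eqP.
Qed.

Lemma unitmx_gram (R : realFieldType) (m k : nat) (X : 'M[R]_(m, k)) :
  \rank X = k -> X^T *m X \in unitmx.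
Proof.
move=> rankX; rewrite -row_free_unit; apply: inj_row_free => v vXTX0.
have XT_free : row_free X^T by rewrite /row_free mxrank_tr rankX.
have : (v *m X^T)^T = 0.
  apply: mxtrace_gram_eq0; rewrite trmxK trmx_mul trmxK mulmxA -(mulmxA v) vXTX0.
  by rewrite !mul0mx mxtrace0.
by move/(congr1 trmx); rewrite trmxK trmx0 => /eqP; rewrite mulmx_free_eq0 // => /eqP.
Qed.

Lemma mxtrace_skew_sym (R : numDomainType) (k : nat) (B S : 'M[R]_k) :
  B^T = - B -> S^T = S -> \tr (B *m S) = 0.
Proof.
move=> skewB symS; have : \tr (B *m S) *+ 2 == 0.
  by rewrite mulr2n addr_eq0 -{1}mxtrace_tr trmx_mul skewB symS mulmxN linearN /= mxtrace_mulC.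
by rewrite mulrn_eq0 /= => /eqP.
Qed.

(* [skew] alone would denote the sesquilinear notation exported by all_algebra. *)
Lemma trmx_skew (R : realFieldType) (k : nat) (A : 'M[R]_k) :
  (Defs.skew A)^T = - Defs.skew A.
Proof. by apply/matrixP => i j; rewrite /Defs.skew !mxE; lra. Qed.

Lemma trmx_subr_skew (R : realFieldType) (k : nat) (A : 'M[R]_k) :
  (A - Defs.skew A)^T = A - Defs.skew A.
Proof. by apply/matrixP => i j; rewrite /Defs.skew !mxE; lra. Qed.

Lemma tangentStP (R : realFieldType) (n p : nat) (X xi : 'M[R]_(n, p)) :
  tangentSt X xi <-> (X^T *m xi)^T = - (X^T *m xi).
Proof.
rewrite /tangentSt trmx_mul trmxK.
by split => [/eqP|->]; [rewrite addr_eq0 => /eqP | exact: addNr].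
Qed.

Lemma tangentStB (R : realFieldType) (n p : nat) (X xi zeta : 'M[R]_(n, p)) :
  tangentSt X xi -> tangentSt X zeta -> tangentSt X (xi - zeta).
Proof.
move=> /tangentStP xiT /tangentStP zetaT; apply/tangentStP.
by rewrite mulmxBr linearB /= xiT zetaT opprD.
Qed.

Lemma gbetaBr (R : realFieldType) (n p : nat) (beta : R) (X xi z1 z2 : 'M[R]_(n, p)) :
  gbeta beta X xi (z1 - z2) = gbeta beta X xi z1 - gbeta beta X xi z2.
Proof. by rewrite /gbeta mulmxBr mulmxBl linearB. Qed.

Section FullRank.

Variables (R : realFieldType) (n p : nat) (X : 'M[R]_(n, p)).
Hypothesis rankX : \rank X = p.

Local Notation G := (X^T *m X).
Local Notation Gi := (invmx (X^T *m X)).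
Local Notation P := (X *m invmx (X^T *m X) *m X^T).

Let G_unit : G \in unitmx := unitmx_gram rankX.

Lemma trmx_gram : G^T = G.
Proof. by rewrite trmx_mul trmxK. Qed.

Lemma trmx_invgram : Gi^T = Gi.
Proof. by rewrite trmx_inv trmx_gram. Qed.

Lemma mulTmx_proj : X^T *m P = X^T.
Proof. by rewrite !mulmxA (mulmxV G_unit) mul1mx. Qed.

Lemma proj_mulmx : P *m X = X.
Proof. by rewrite -mulmxA (mulmxKV G_unit). Qed.

Lemma metric_mulmx (beta : R) : (1%:M - (1 - beta) *: P) *m X = beta *: X.
Proof.
by rewrite mulmxBl mul1mx -scalemxAl proj_mulmx scalerBl scale1r opprB addrC subrK.
Qed.

Lemma mulTmx_metric (beta : R) : X^T *m (1%:M - (1 - beta) *: P) = beta *: X^T.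
Proof.
by rewrite mulmxBr mulmx1 -scalemxAr mulTmx_proj scalerBl scale1r opprB addrC subrK.
Qed.

Lemma gbeta_sym_range_eq0 (beta : R) (xi : 'M[R]_(n, p)) (Y : 'M[R]_p) :
  tangentSt X xi -> Y^T = Y -> gbeta beta X xi (X *m Gi *m Y) = 0.
Proof.
move=> /tangentStP xiT symY.
rewrite /gbeta !mulmxA -(mulmxA _ _ X) metric_mulmx -scalemxAr -!scalemxAl mxtraceZ.
rewrite -!mulmxA mulmxA mxtrace_skew_sym ?mulr0 //.
  by move: xiT; rewrite !trmx_mul !trmxK => ->; rewrite opprK.
by rewrite !trmx_mul trmx_invgram symY mulmxA.
Qed.

Lemma mulTmx_projFormula (Z : 'M[R]_(n, p)) :
  X^T *m projFormula X Z = Defs.skew (X^T *m Z).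
Proof.
rewrite /projFormula mulmxDr [X^T *m (_ *m Z)]mulmxA mulmxBr mulmx1 mulTmx_proj.
by rewrite subrr mul0mx addr0 !mulmxA (mulmxV G_unit) mul1mx.
Qed.

Lemma tangentSt_projFormula (Z : 'M[R]_(n, p)) : tangentSt X (projFormula X Z).
Proof. by apply/tangentStP; rewrite mulTmx_projFormula trmx_skew. Qed.

Lemma sub_projFormula (Z : 'M[R]_(n, p)) :
  Z - projFormula X Z = X *m Gi *m (X^T *m Z - Defs.skew (X^T *m Z)).
Proof.
rewrite /projFormula mulmxBl mul1mx mulmxBr !mulmxA.
by rewrite opprD opprB addrCA (addrCA Z) subrr addr0 addrC.
Qed.

Lemma gbeta_sub_projFormula (beta : R) (Z xi : 'M[R]_(n, p)) :
  tangentSt X xi -> gbeta beta X xi (Z - projFormula X Z) = 0.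
Proof.
by move=> xiT; rewrite sub_projFormula gbeta_sym_range_eq0 // trmx_subr_skew.
Qed.

Lemma gbeta_mulmx_gram (beta : R) (xi zeta : 'M[R]_(n, p)) :
  gbeta beta X (xi *m G) zeta = \tr (xi^T *m (1%:M - (1 - beta) *: P) *m zeta).
Proof.
rewrite /gbeta trmx_mul trmx_gram; move: (1%:M - _) => M.
have := G_unit; move: (X^T *m X) => G0 G0_unit.
by rewrite -!mulmxA mxtrace_mulC -!mulmxA (mulVmx G0_unit) mulmx1 mulmxA.
Qed.

Lemma gbeta_proj_compl (beta : R) (D : 'M[R]_(n, p)) :
  gbeta beta X ((D - P *m D) *m G) D = \tr ((D - P *m D)^T *m (D - P *m D)).
Proof.
set N := D - P *m D.
have NTX : N^T *m X = 0.
  by rewrite -[_ *m X]trmxK trmx_mul trmxK mulmxBr mulmxA mulTmx_proj subrr trmx0.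
have NTP : N^T *m P = 0 by rewrite !mulmxA NTX !mul0mx.
rewrite gbeta_mulmx_gram mulmxBr mulmx1 -scalemxAr NTP scaler0 subr0.
by rewrite {2}/N mulmxBr mulmxA NTP mul0mx subr0.
Qed.

Lemma gbeta_range (beta : R) (D : 'M[R]_(n, p)) :
  gbeta beta X (X *m (X^T *m D) *m G) D = beta * \tr ((X^T *m D)^T *m (X^T *m D)).
Proof.
rewrite gbeta_mulmx_gram [(X *m _)^T]trmx_mul -(mulmxA _ X^T) mulTmx_metric.
by rewrite -scalemxAr -scalemxAl mxtraceZ mulmxA.
Qed.

Lemma tangentSt_proj_compl (D : 'M[R]_(n, p)) : tangentSt X ((D - P *m D) *m G).
Proof.
have XTN : X^T *m (D - P *m D) = 0 by rewrite mulmxBr mulmxA mulTmx_proj subrr.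
by apply/tangentStP; rewrite mulmxA XTN mul0mx trmx0 oppr0.
Qed.

Lemma tangentSt_range_skew (A : 'M[R]_p) : A^T = - A -> tangentSt X (X *m A *m G).
Proof.
move=> skewA; apply/tangentStP.
have -> : X^T *m (X *m A *m G) = G *m A *m G by rewrite !mulmxA.
by rewrite trmx_mul [(_ *m A)^T]trmx_mul trmx_gram skewA mulNmx mulmxN mulmxA.
Qed.

Lemma gbeta_tangent_nondegenerate (beta : R) (D : 'M[R]_(n, p)) :
  0 < beta -> tangentSt X D ->
  (forall xi, tangentSt X xi -> gbeta beta X xi D = 0) -> D = 0.
Proof.
move=> beta_gt0 /tangentStP DT Dperp.
have N0 : D - P *m D = 0.
  apply: mxtrace_gram_eq0.
  by rewrite -(gbeta_proj_compl beta) (Dperp _ (tangentSt_proj_compl D)).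
have A0 : X^T *m D = 0.
  apply: mxtrace_gram_eq0; apply/eqP.
  move: (Dperp _ (tangentSt_range_skew DT)) => /eqP.
  by rewrite gbeta_range mulf_eq0 gt_eqF.
by rewrite -[D](subrK (P *m D)) N0 add0r -!mulmxA A0 !mulmx0.
Qed.

End FullRank.

Theorem proposition4 (R : realFieldType) (n p : nat) (beta : R)
  (X : 'M[R]_(n, p)) :
  (1 <= p)%N -> (p <= n)%N -> 0 < beta -> \rank X = p ->
  forall Z : 'M[R]_(n, p),
    [/\ tangentSt X (projFormula X Z),
        (forall xi, tangentSt X xi -> gbeta beta X xi (Z - projFormula X Z) = 0)
      & (forall W, tangentSt X W ->
           (forall xi, tangentSt X xi -> gbeta beta X xi (Z - W) = 0) ->
           W = projFormula X Z)].
Proof.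
move=> _ _ beta_gt0 rankX Z; split.
- exact: tangentSt_projFormula.
- by move=> xi; apply: gbeta_sub_projFormula.
move=> W WT Wperp; apply/eqP; rewrite -subr_eq0; apply/eqP.
apply: (gbeta_tangent_nondegenerate rankX beta_gt0).
  exact: tangentStB WT (tangentSt_projFormula rankX Z).
move=> xi xiT.
have -> : W - projFormula X Z = (Z - projFormula X Z) - (Z - W).
  by rewrite opprB [RHS]addrC addrA subrK.
by rewrite gbetaBr gbeta_sub_projFormula // Wperp // subrr.
Qed.
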